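(* For a compact Hausdorff space $(X,\tau)$ the following are equivalent: (1) $X$ has the property $\textsf{S}_1(\mathcal{O},\mathcal{O})$; (2) TWO has a winning strategy in the game ${\sf G}_1(\mathcal{O},\mathcal{O})$.
   Context: $\mathcal{O}$: open covers of $X$. $\textsf{S}_1(\mathcal{O},\mathcal{O})$: for every sequence $(\mathcal{U}_n)$ of open covers there are $U_n\in\mathcal{U}_n$ with $\{U_n:n\in\mathbb{N}\}$ covering $X$. Game ${\sf G}_1(\mathcal{O},\mathcal{O})$: in inning $n\in\mathbb{N}$ ONE chooses an open cover $O_n$ of $X$, TWO responds with $T_n\in O_n$; TWO wins if $\{T_n:n\in\mathbb{N}\}$ covers $X$, otherwise ONE wins. *)

From HB Require Import structures.
From mathcomp Require Import all_boot all_order.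
From mathcomp Require Import all_classical all_reals topology.
Set Implicit Arguments. Unset Strict Implicit. Unset Printing Implicit Defensive.
Local Open Scope classical_set_scope.

Definition open_cover {X : topologicalType} (O : set (set X)) : Prop :=
  (forall U, O U -> open U) /\ (forall x : X, exists2 U, O U & U x).

Definition S1_OO (X : topologicalType) : Prop :=
  forall O : nat -> set (set X), (forall n, open_cover (O n)) ->
  exists U : nat -> set X, (forall n, O n (U n)) /\
    (forall x : X, exists n, U n x).

(* A strategy for TWO in G_1(O,O): given the list of ONE's moves so far
   (O_0, ..., O_n), TWO answers with a set. *)
Definition strategy_TWO (X : topologicalType) := seq (set (set X)) -> set X.

Definition history {X : topologicalType} (O : nat -> set (set X)) (n : nat)
  : seq (set (set X)) := mkseq O n.+1.

Definition winning_TWO (X : topologicalType) (sigma : strategy_TWO X) : Prop :=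
  forall O : nat -> set (set X), (forall n, open_cover (O n)) ->
    (forall n, O n (sigma (history O n))) /\
    (forall x : X, exists n, sigma (history O n) x).

Definition TWO_wins_G1_OO (X : topologicalType) : Prop :=
  exists sigma : strategy_TWO X, winning_TWO sigma.

From mathcomp Require Import all_boot all_order.
From mathcomp Require Import all_classical all_reals topology.
Local Open Scope classical_set_scope.

(* A position is the union S of TWO's answers so far.  TWO wins from S if she
   has a strategy that is a well-founded tree, so that every play along it
   covers X after finitely many innings.  If TWO could not win from the empty
   position, ONE could answer each such losing position S with an open cover
   all of whose members U keep S `|` U losing, and by compactness finitely many
   members suffice.  Then only finitely many positions are reachable after n
   innings, and the common open refinement of their counter-covers is a single
   open cover O_n.  A selection from (O_n) covering X, as S_1(O,O) provides,
   steers a play through losing positions whose open unions cover X; by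
   compactness one of them is all of X, which is absurd. *)

Section WinTree.
Context {X : topologicalType}.
Implicit Types (S U : set X) (C : set (set X)) (O : nat -> set (set X)).

Inductive win_tree S : Type :=
| win_done : [set: X] `<=` S -> win_tree S
| win_move (g : forall C, open_cover C -> set X) :
    (forall C (hC : open_cover C), C (g C hC)) ->
    (forall C (hC : open_cover C), win_tree (S `|` g C hC)) -> win_tree S.
Arguments win_done {S}.
Arguments win_move {S g}.

Definition tree_step {S} (t : win_tree S) C : {U : set X & win_tree (S `|` U)} :=
  match t with
  | win_done hS => existT _ (xget setT C) (win_done (subset_trans hS (@subsetUl _ S _)))
  | win_move g _ next => match pselect (open_cover C) with
    | left hC => existT _ (g C hC) (next C hC)
    | right _ => existT _ setT (win_done (@subsetUr _ S setT))
    end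
  end.

Fixpoint tree_answer {S} (t : win_tree S) (h : seq (set (set X))) : set X :=
  match h with
  | [::] => setT
  | C :: h' => if h' is [::] then projT1 (tree_step t C)
               else tree_answer (projT2 (tree_step t C)) h'
  end.

Lemma history_succ O n : history O n.+1 = O 0%N :: history (fun i => O i.+1) n.
Proof. by rewrite /history /mkseq /= -[2%N]/(1 + 1)%N iotaDl -map_comp. Qed.

Lemma tree_step_legal {S} (t : win_tree S) C :
  open_cover C -> C !=set0 -> C (projT1 (tree_step t C)).
Proof.
case: t => [_|g g_legal next] hC hC0 /=; first exact: xgetPex hC0.
by case: pselect => // hC1; exact: g_legal.
Qed.

Lemma tree_answer_history0 {S} (t : win_tree S) O :
  tree_answer t (history O 0) = projT1 (tree_step t (O 0%N)).
Proof. by []. Qed.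

Lemma tree_answer_history_succ {S} (t : win_tree S) O n :
  tree_answer t (history O n.+1) =
  tree_answer (projT2 (tree_step t (O 0%N))) (history (fun i => O i.+1) n).
Proof. by rewrite history_succ. Qed.

Lemma tree_answer_legal {S} (t : win_tree S) O n :
  (forall n, open_cover (O n)) -> (forall n, O n !=set0) ->
  O n (tree_answer t (history O n)).
Proof.
elim: n S t O => [|n IHn] S t O hO hO0; first exact: tree_step_legal.
by rewrite tree_answer_history_succ; exact: IHn (fun i => hO i.+1) (fun i => hO0 i.+1).
Qed.

Lemma tree_answer_cover {S} (t : win_tree S) O :
  (forall n, open_cover (O n)) ->
  forall x, S x \/ exists n, tree_answer t (history O n) x.
Proof.
elim: t O => [S' hS|S' g g_legal next IHnext] O hO x; first by left; exact: hS.
have [hO0 step_eq] : exists hO0,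
    tree_step (win_move g_legal next) (O 0%N) = existT _ _ (next (O 0%N) hO0).
  by rewrite /=; case: pselect => [h|/(_ (hO 0%N))//]; exists h.
have [[Sx|Ux]|[n ans_x]] := IHnext _ hO0 (fun i => O i.+1) (fun i => hO i.+1) x.
- by left.
- by right; exists 0%N; rewrite tree_answer_history0 step_eq.
- by right; exists n.+1; rewrite tree_answer_history_succ step_eq.
Qed.

End WinTree.

Section Compactness.
Context {X : topologicalType}.
Hypothesis cptX : compact [set: X].

Lemma compact_finite_subcover {C : set (set X)} : open_cover C ->
  exists2 s : seq (set X), {subset s <= C} & forall x, exists2 U, U \in s & U x.
Proof.
move=> [C_open C_cover].
pose F := filter_from [set s0 : seq (set X) | {subset s0 <= C}]
  (fun s0 : seq (set X) => [set s : seq (set X) | {subset s0 <= s} /\ {subset s <= C}]).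
have F_filter : Filter F.
  apply: filter_from_filter; first by exists [::].
  move=> s0 s1 s0C s1C; exists (s0 ++ s1).
    by move=> U; rewrite mem_cat => /orP[]; [exact: s0C|exact: s1C].
  by move=> s [s01 sC]; split; split=> // U Us; apply: s01; rewrite mem_cat Us ?orbT.
have [x _|s0 s0C s0_cover] := (compact_near_coveringP [set: X]).1 cptX _ F
    (fun s x => exists2 U, U \in s & U x) F_filter.
  have [U CU Ux] := C_cover x.
  exists (U, [set s | {subset [:: U] <= s} /\ {subset s <= C}]).
    split; first by apply: open_nbhs_nbhs; split => //; exact: C_open.
    by exists [:: U] => // V; rewrite inE => /eqP ->; rewrite in_setE.
  by case=> y s [/= Uy [Us _]]; exists U => //; apply: Us; rewrite inE.
by exists s0 => // x; exact: (s0_cover s0 (conj (fun _ => id) s0C)).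
Qed.

Lemma compact_increasing_open_cover (A : nat -> set X) :
  (forall n, open (A n)) -> (forall n, A n `<=` A n.+1) ->
  (forall x, exists n, A n x) -> exists n, [set: X] `<=` A n.
Proof.
move=> A_open A_incr A_cover.
have A_mono := homo_leq (@subset_refl _) (fun _ _ _ => @subset_trans _ _ _ _) A_incr.
have rangeA_cover : open_cover (range A).
  split; first by move=> _ [n _ <-].
  by move=> x; have [n Anx] := A_cover x; exists (A n).
have [s sA s_cover] := compact_finite_subcover rangeA_cover.
suff [m sm] : exists m, forall U, U \in s -> U `<=` A m.
  by exists m => x _; have [U sU Ux] := s_cover x; exact: sm U sU x Ux.
elim: s sA {s_cover} => [|U s IHs] sA; first by exists 0%N.
have [k _ <-] : range A U by rewrite -in_setE; apply: sA; rewrite mem_head.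
have [m sm] : exists m, forall V, V \in s -> V `<=` A m.
  by apply: IHs => V sV; apply: sA; rewrite inE sV orbT.
exists (maxn k m) => V; rewrite inE => /orP[/eqP->|/sm Vm].
  exact/A_mono/leq_maxl.
exact: subset_trans Vm (A_mono _ _ (leq_maxr _ _)).
Qed.

End Compactness.

Lemma common_refinement_open_cover {X : topologicalType} {I : eqType}
    (s : seq I) (C : I -> set (set X)) :
  (forall i, i \in s -> open_cover (C i)) ->
  open_cover [set V | open V /\ forall i, i \in s -> exists2 U, C i U & V `<=` U].
Proof.
elim: s => [|i s IHs] C_cover.
  by split=> [V []//|x]; exists setT => //; split=> //; exact: openT.
have [ref_open ref_cover] := IHs (fun j sj => C_cover j (@predU1r _ j i _ sj)).
have [Ci_open Ci_cover] := C_cover i (mem_head i s).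
split=> [V []//|x].
have [V [V_open V_ref] Vx] := ref_cover x; have [U CiU Ux] := Ci_cover x.
exists (V `&` U) => //; split; first by apply: openI => //; exact: Ci_open.
move=> j; rewrite inE => /orP[/eqP->|sj]; first by exists U => // y [].
by have [W CjW VW] := V_ref j sj; exists W => // y [/VW].
Qed.

Section Unwinnable.
Context {X : topologicalType}.
Implicit Types (S U : set X) (C : set (set X)).

Definition unwinnable S := ~ inhabited (win_tree S).

Lemma unwinnable_counter_cover S : unwinnable S ->
  exists2 C, open_cover C & forall U, C U -> unwinnable (S `|` U).
Proof.
move=> S_lost; apply: contrapT => no_counter; apply: S_lost.
have answer C : open_cover C -> exists p : {U & win_tree (S `|` U)}, C (projT1 p).
  move=> hC; apply: contrapT => no_answer; apply: no_counter; exists C => // U CU [t].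
  by apply: no_answer; exists (existT _ U t).
constructor; apply: (@win_move _ _ (fun C hC => projT1 (proj1_sig (cid (answer C hC))))).
  by move=> C hC; exact: (proj2_sig (cid (answer C hC))).
by move=> C hC; exact: (projT2 (proj1_sig (cid (answer C hC)))).
Qed.

Lemma unwinnable_finite_counter_cover S : compact [set: X] -> unwinnable S ->
  exists s : seq (set X), (forall x, exists2 U, U \in s & U x) /\
    forall U, U \in s -> open U /\ unwinnable (S `|` U).
Proof.
move=> cptX /unwinnable_counter_cover[C C_cover C_lost].
have [s sC s_cover] := compact_finite_subcover cptX C_cover.
exists s; split=> // U /sC; rewrite in_setE => CU.
by split; [exact: C_cover.1 | exact: C_lost].
Qed.

Lemma unwinnable_not_covering S : unwinnable S -> ~ [set: X] `<=` S.
Proof. by move=> S_lost hS; apply: S_lost; constructor; exact: win_done. Qed.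

End Unwinnable.

Section CounterPlay.
Context {X : topologicalType}.
Variable F : set X -> seq (set X).
Hypothesis F_cover : forall S, unwinnable S -> forall x, exists2 U, U \in F S & U x.
Hypothesis F_counter : forall S U, unwinnable S -> U \in F S ->
  open U /\ unwinnable (S `|` U).
Hypothesis root_unwinnable : unwinnable (@set0 X).

Fixpoint reach n : seq (set X) :=
  if n is m.+1 then [seq A `|` U | A <- reach m, U <- F A] else [:: set0].

Lemma reach_unwinnable {n S} : S \in reach n -> unwinnable S.
Proof.
elim: n S => [|n IHn] S /=; first by rewrite inE => /eqP->.
by case/allpairsPdep => [S' [U [S'n UF ->]]]; exact: (F_counter _ _ (IHn _ S'n) UF).2.
Qed.

Definition refining_cover n := [set V | open V /\
  forall S, S \in reach n -> exists2 U, U \in F S & V `<=` U].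

Lemma refining_cover_open_cover n : open_cover (refining_cover n).
Proof.
apply: (common_refinement_open_cover (reach n) (fun S => [set U | U \in F S])).
move=> S /reach_unwinnable S_lost; split=> [U /= FU|]; last exact: F_cover.
exact: (F_counter _ _ S_lost FU).1.
Qed.

Lemma refining_selection_not_cover (V : nat -> set X) : compact [set: X] ->
  (forall n, refining_cover n (V n)) -> ~ forall x, exists n, V n x.
Proof.
move=> cptX V_ref V_cover.
have /choice[g g_spec] : forall n, exists gn : set X -> set X,
    forall S, S \in reach n -> gn S \in F S /\ V n `<=` gn S.
  move=> n; have [_ V_refn] := V_ref n.
  have /choice[gn gn_spec] : forall S, exists U,
      S \in reach n -> U \in F S /\ V n `<=` U.
    by move=> S; case: (boolP (S \in reach n)) => [/V_refn[U]|_]; [exists U | exists set0].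
  by exists gn.
pose play := fix play n := if n is m.+1 then play m `|` g m (play m) else set0.
have play_reach n : play n \in reach n.
  elim: n => [|n IHn] /=; first by rewrite inE.
  exact: (allpairs_f_dep (fun S U => S `|` U) IHn (g_spec n _ IHn).1).
have [m play_full] : exists m, [set: X] `<=` play m.
  apply: (compact_increasing_open_cover cptX).
  - elim=> [|n IHn] /=; first exact: open0.
    apply: openU => //; have /g_spec[gF _] := play_reach n.
    exact: (F_counter _ _ (reach_unwinnable (play_reach n)) gF).1.
  - by move=> n x px; left.
  - move=> x; have [n Vx] := V_cover x; exists n.+1; right.
    by have /g_spec[_ Vg] := play_reach n; exact: Vg.
exact: unwinnable_not_covering _ (reach_unwinnable (play_reach m)) play_full.
Qed.

End CounterPlay.

Lemma S1_OO_win_tree {X : topologicalType} : compact [set: X] -> S1_OO X ->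
  inhabited (win_tree (@set0 X)).
Proof.
move=> cptX S1; apply: contrapT => root_lost.
have /choice[F F_spec] : forall S, exists s : seq (set X), unwinnable S ->
    (forall x, exists2 U, U \in s & U x) /\
    (forall U, U \in s -> open U /\ unwinnable (S `|` U)).
  move=> S; case: (pselect (unwinnable S)) => [S_lost|S_won].
    by have [s s_spec] := unwinnable_finite_counter_cover _ cptX S_lost; exists s.
  by exists [::] => /S_won.
have F_cover S (S_lost : unwinnable S) := (F_spec S S_lost).1.
have F_counter S U (S_lost : unwinnable S) := (F_spec S S_lost).2 U.
have [V [V_ref V_cover]] := S1 _ (refining_cover_open_cover _ F_cover F_counter root_lost).
exact: refining_selection_not_cover _ F_counter root_lost V cptX V_ref V_cover.
Qed.

Lemma S1_OO_cover_neq0 {X : topologicalType} (C : set (set X)) :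
  S1_OO X -> open_cover C -> C !=set0.
Proof. by move=> S1 hC; have [U [CU _]] := S1 (fun=> C) (fun=> hC); exists (U 0%N). Qed.

Lemma win_tree_winning {X : topologicalType} (t : win_tree (@set0 X)) :
  (forall C : set (set X), open_cover C -> C !=set0) -> winning_TWO (tree_answer t).
Proof.
move=> covers_neq0 O hO; split=> [n|x].
  exact: tree_answer_legal t O n hO (fun n => covers_neq0 _ (hO n)).
by have [|] := tree_answer_cover t O hO x.
Qed.

Theorem lemma8p4 (X : topologicalType) (hcpt : compact [set: X])
  (hT2 : hausdorff_space X) :
  S1_OO X <-> TWO_wins_G1_OO X.
Proof.
split=> [S1|[sigma sigma_win] O hO].
  have [t] := S1_OO_win_tree hcpt S1.
  by exists (tree_answer t); apply: win_tree_winning => C; exact: S1_OO_cover_neq0.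
by exists (fun n => sigma (history O n)); exact: sigma_win.
Qed.
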